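(* At any point during the execution of the Part I procedure, let $B$ be a blossom (node of the search structure $S$) with base $b$, and let $v$ be a vertex of $B$. Then $b$ lies on the canonical path of $v$, and the subpath of the canonical path of $v$ that starts in $b$ and ends in $v$ has length $\mathrm{lcp}(v)-\mathrm{lcp}(b)$.
   Context: Let $G=(V,E)$ be a finite undirected graph with $n$ vertices and $M$ a matching in $G$. A vertex is free if no edge of $M$ is incident to it; for a matched vertex $v$, $\mathit{mate}(v)$ is its partner. An alternating path is a simple path whose edges alternate between $E\setminus M$ and $M$; an augmenting path is an alternating path connecting two distinct free vertices; a shortest augmenting path is called a sap. For a vertex $v$, $\mathrm{Lcp}(v)$ (resp. $\mathrm{Lcp}_{\mathrm{odd}}(v)$) denotes the minimum length of an even-length (resp. odd-length) alternating path in $G$ from a free vertex to $v$ ($\infty$ if none). The Part I procedure maintains a search structure $S$: a forest whose nodes are either single (odd) vertices or blossoms (disjoint vertex sets with a distinguished vertex, the base); each tree is rooted at a blossom containing a free vertex. Vertices in $S$ are labelled even (those in blossoms) or odd; vertices not in $S$ are unlabelled. A vertex is born even/odd according to the label it receives when inserted. The procedure maintains $\mathrm{lcp}(v)$ for even vertices and $\mathrm{lcp}_{\mathrm{odd}}(v)$ for vertices born odd. The blossom nodes currently in $S$ are the maximal blossoms. Phase $0$: every free vertex becomes the root of its own tree as a trivial blossom $\{v\}$ with base $v$, labelled even, $\mathrm{lcp}(v)=0$. Then for $\Delta=1,2,\dots$, phase $\Delta$ does: (i) if $\Delta$ is even, growth steps: while some even vertex $v$ with $\mathrm{lcp}(v)=\Delta-2$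 has a neighbour $x$ not in $S$ (such $x$ is matched), add $x$ as an odd child of the blossom containing $v$ with $\mathrm{lcp}_{\mathrm{odd}}(x)=\Delta-1$, and add $\mathit{mate}(x)$ as a child of $x$, as a trivial even blossom with $\mathrm{lcp}(\mathit{mate}(x))=\Delta$; (ii) bridge steps: while there is a non-matching edge $xy$ with $x,y$ even, lying in different maximal blossoms $B_x,B_y$, and $\mathrm{lcp}(x)+\mathrm{lcp}(y)=2\Delta-2$: if $B_x,B_y$ lie in different trees, the procedure stops (''an augmenting path is found in phase $\Delta$''); otherwise let $B$ be the lowest common ancestor of $B_x$ and $B_y$ in their tree (a blossom). Every odd vertex $z$ on the tree path from $B_x$ to $B$ or from $B_y$ to $B$ becomes even with $\mathrm{lcp}(z)=\mathrm{lcp}(x)+1+\mathrm{lcp}(y)-\mathrm{lcp}_{\mathrm{odd}}(z)$, and $B$ together with all blossoms and odd vertices on both tree paths is merged into one new blossom with the base of $B$ as its base, which takes the place of $B$ in the tree (children of merged nodes become its children); $xy$ is the bridge of the new blossom. Canonical paths: a free root vertex has the trivial path; in a growth step from $v$ to $x$, the canonical path of $x$ is that of $v$ followed by $vx$, and that of $\mathit{mate}(x)$ is that of $x$ followed by $x\,\mathit{mate}(x)$; in a bridge step, for an odd vertex $z$ on the path from $B_y$ to $B$ the new canonical path of $z$ is the canonical path of $x$, then the edge $xy$, then the reversal of the subpath of the canonical path of $y$ from $z$ to $y$ (symmetrically with $x,y$ exchanged for $z$ on the path from $B_x$ to $B$). *)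

(* Model of the Part I procedure as a nondeterministic
   transition system; the lemma is an invariant of all reachable states. *)
From mathcomp Require Import all_boot.
Set Implicit Arguments. Unset Strict Implicit. Unset Printing Implicit Defensive.

Definition is_matching (V : finType) (e : rel V) (mate : V -> option V) :=
  forall u w, mate u = Some w -> mate w = Some u /\ e u w.

(* State of the search structure S.
   - nodes: the nodes of the forest (odd nodes are singletons {x},
     blossom nodes are vertex sets); blossoms: the blossom nodes
     (= current maximal blossoms), a subset of nodes;
   - parent: parent pointer of the forest on nodes;
   - base: base of a blossom;
   - lcp / lcpo: the maintained values lcp and lcp_odd;
   - cp v: canonical path of v, as the vertex sequence from the free root
     vertex to v (its length is size - 1);
   - delta: current phase; growing: whether we are in the growth part (i)
     of the phase (true) or in the bridge part (ii) (false). *)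
Record state (V : finType) := St {
  delta : nat;
  growing : bool;
  nodes : {set {set V}};
  blossoms : {set {set V}};
  parent : {set V} -> option {set V};
  base : {set V} -> option V;
  lcp : V -> nat;
  lcpo : V -> nat;
  cp : V -> seq V }.

Section Procedure.
Variables (V : finType) (e : rel V) (mate : V -> option V).

Definition free (v : V) : bool := mate v == None.

Definition inS (s : state V) (x : V) : bool := [exists C in nodes s, x \in C].

Definition anc (s : state V) (A C : {set V}) : bool :=
  connect [rel C D | parent s C == Some D] C A.

Definition init_state : state V :=
  {| delta := 1; growing := true;
     nodes := [set [set v] | v in [pred v | free v]];
     blossoms := [set [set v] | v in [pred v | free v]];
     parent := fun _ => None;
     base := fun C => [pick v in C];
     lcp := fun _ => 0; lcpo := fun _ => 0;
     cp := fun v => [:: v] |}.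

Definition grow (s : state V) (Bv : {set V}) (v x y : V) : state V :=
  {| delta := delta s; growing := true;
     nodes := nodes s :|: [set [set x]; [set y]];
     blossoms := blossoms s :|: [set [set y]];
     parent := fun C => if C == [set x] then Some Bv
                        else if C == [set y] then Some [set x] else parent s C;
     base := fun C => if C == [set y] then Some y else base s C;
     lcp := fun w => if w == y then delta s else lcp s w;
     lcpo := fun w => if w == x then (delta s).-1 else lcpo s w;
     cp := fun w => if w == x then rcons (cp s v) x
                    else if w == y then rcons (rcons (cp s v) x) y
                    else cp s w |}.

Definition growth_possible (s : state V) : Prop :=
  ~~ odd (delta s) /\
  exists Bv v x, [/\ Bv \in blossoms s, v \in Bv, lcp s v = delta s - 2,
                     e v x & ~~ inS s x].

Definition pathP (s : state V) (Bx By B : {set V}) : {set {set V}} :=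
  [set C in nodes s | anc s B C && (anc s C Bx || anc s C By)].

Definition oddOn (s : state V) (Bz B : {set V}) : {set V} :=
  [set z | [exists C in nodes s,
     [&& C \notin blossoms s, z \in C, anc s B C & anc s C Bz]]].

Definition merge (s : state V) (x y : V) (Bx By B : {set V}) : state V :=
  let P := pathP s Bx By B in
  let N := \bigcup_(C in P) C in
  let oX := oddOn s Bx B in
  let oY := oddOn s By B in
  {| delta := delta s; growing := false;
     nodes := (nodes s :\: P) :|: [set N];
     blossoms := (blossoms s :\: P) :|: [set N];
     parent := fun C => if C == N then parent s B else
                 match parent s C with
                 | Some D => if D \in P then Some N else Some D
                 | None => None end;
     base := fun C => if C == N then base s B else base s C;
     lcp := fun z => if (z \in oX) || (z \in oY)
                     then lcp s x + 1 + lcp s y - lcpo s z else lcp s z;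
     lcpo := lcpo s;
     cp := fun z =>
       if z \in oY then cp s x ++ rev (drop (index z (cp s y)) (cp s y))
       else if z \in oX then cp s y ++ rev (drop (index z (cp s x)) (cp s x))
       else cp s z |}.

Definition bridge_candidate (s : state V) (x y : V) : Prop :=
  e x y /\ mate x <> Some y /\
  exists Bx By, [/\ Bx \in blossoms s, By \in blossoms s, x \in Bx, y \in By &
                    Bx != By] /\ lcp s x + lcp s y = 2 * delta s - 2.

Inductive step : state V -> state V -> Prop :=
| step_grow s Bv v x y :
    growing s -> ~~ odd (delta s) -> Bv \in blossoms s -> v \in Bv ->
    lcp s v = delta s - 2 -> e v x -> ~~ inS s x -> mate x = Some y ->
    step s (grow s Bv v x y)
| step_end_growth s :
    growing s -> ~ growth_possible s ->
    step s {| delta := delta s; growing := false; nodes := nodes s;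
              blossoms := blossoms s; parent := parent s; base := base s;
              lcp := lcp s; lcpo := lcpo s; cp := cp s |}
| step_bridge s x y Bx By B :
    ~~ growing s -> e x y -> mate x <> Some y ->
    Bx \in blossoms s -> By \in blossoms s -> x \in Bx -> y \in By -> Bx != By ->
    lcp s x + lcp s y = 2 * delta s - 2 ->
    anc s B Bx -> anc s B By ->
    (forall A, anc s A Bx -> anc s A By -> anc s A B) ->
    step s (merge s x y Bx By B)
| step_end_bridge s :
    (* no candidate edge left at all (a candidate in different trees stops
       the procedure, i.e. no further step) *)
    ~~ growing s -> ~ (exists x y, bridge_candidate s x y) ->
    step s {| delta := (delta s).+1; growing := true; nodes := nodes s;
              blossoms := blossoms s; parent := parent s; base := base s;
              lcp := lcp s; lcpo := lcpo s; cp := cp s |}.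

Inductive reachable : state V -> Prop :=
| reach_init : reachable init_state
| reach_step s s' : reachable s -> step s s' -> reachable s'.

End Procedure.

(* Lemma 1 is an invariant of all reachable states, proved together with
   the structural facts that keep it inductive.  Give every node of S a key
   (the base of a blossom, the vertex of an odd node {x}) labelled by lcp,
   resp. lcp_odd.  The invariant: for every vertex w of a node C and every
   ancestor A of C, the key of A lies on the canonical path of w at the
   position given by its label, and that path has as many edges as the label
   of w.  Taking A = C = B gives the lemma.

   A growth step extends cp v by x and mate x, which are new vertices
   (S contains all canonical paths and is closed under mates).  In a bridge
   step the new canonical path of an odd vertex z begins with the whole
   canonical path of x (or y), which already carries the keys of all
   ancestors of the new blossom at the right positions; its length comes out
   as lcp x + 1 + lcp y - lcp_odd z because z sits at position lcp_odd z on
   cp y.  The lowest common ancestor used in a bridge step is a blossom since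
   an odd node has a single child, and labels strictly decrease towards the
   roots, which keeps the forest acyclic. *)

From Pilot Require Import Defs.
From mathcomp Require Import all_boot zify.
Set Implicit Arguments. Unset Strict Implicit. Unset Printing Implicit Defensive.

Section Forest.
Variables (V : finType) (s : state V).
Implicit Types (A C D E K : {set V}).

Lemma anc_refl A : anc s A A.
Proof. exact: connect0. Qed.

Lemma anc_trans A C D : anc s A C -> anc s C D -> anc s A D.
Proof. by move=> hAC hCD; apply: connect_trans hCD hAC. Qed.

Lemma anc_parent A C D : parent s C = Some D -> anc s A D -> anc s A C.
Proof. by move=> hp; apply: connect_trans; apply: connect1; rewrite /= hp. Qed.

Lemma ancP A C :
  anc s A C -> A = C \/ exists2 D, parent s C = Some D & anc s A D.
Proof.
case/connectP=> [[|D p]] /=; first by left.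
by case/andP=> /eqP hp hpath ->; right; exists D => //; apply/connectP; exists p.
Qed.

Lemma anc_ind (P : {set V} -> Prop) C :
  P C -> (forall D E, anc s D C -> P D -> parent s D = Some E -> P E) ->
  forall A, anc s A C -> P A.
Proof.
move=> PC PS A /connectP [p hp ->].
elim: p C PC hp PS => [|D p IHp] C PC //= /andP [/eqP hCD hp] PS.
apply: IHp hp _ => [|D1 E hD1]; first exact: PS (anc_refl C) PC hCD.
by apply: PS; apply: anc_trans hD1 _; apply: anc_parent hCD (anc_refl D).
Qed.

Lemma anc_child A C :
  anc s A C -> A = C \/ exists2 K, parent s K = Some A & anc s K C.
Proof.
move=> h; pattern A; apply: (anc_ind _ _ h) => [|D E hD _ hp]; [left | right; exists D] => //.
Qed.

End Forest.

Section Invariant.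
Variables (V : finType) (mate : V -> option V).
Implicit Types (s : state V) (A C D O : {set V}).

Definition node_key s A : option V :=
  if A \in blossoms s then base s A else [pick a in A].

Definition key_lcp s A (a : V) : nat :=
  if A \in blossoms s then lcp s a else lcpo s a.

Definition node_level s A : nat :=
  if node_key s A is Some a then key_lcp s A a else 0.

Record search_inv s : Prop := {
  delta_gt0 : 0 < delta s;
  blossom_node : {subset blossoms s <= nodes s};
  nodes_disjoint : forall C D, C \in nodes s -> D \in nodes s -> C != D ->
    [disjoint C & D];
  node_keyP : forall A, A \in nodes s -> exists2 a, node_key s A = Some a & a \in A;
  odd_node_set1 : forall A, A \in nodes s -> A \notin blossoms s ->
    exists a, A = [set a];
  parent_level : forall C D, C \in nodes s -> parent s C = Some D ->
    D \in nodes s /\ node_level s D < node_level s C;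
  odd_child_uniq : forall O C1 C2, C1 \in nodes s -> C2 \in nodes s ->
    O \notin blossoms s -> parent s C1 = Some O -> parent s C2 = Some O -> C1 = C2;
  cp_anc_key : forall C w A, C \in nodes s -> w \in C -> anc s A C ->
    exists a, [/\ node_key s A = Some a, a \in cp s w &
                  index a (cp s w) = key_lcp s A a];
  size_cp : forall C w, C \in nodes s -> w \in C ->
    size (cp s w) = (key_lcp s C w).+1;
  cp_inS : forall C w u, C \in nodes s -> w \in C -> u \in cp s w -> inS s u;
  inS_mate : forall u w, inS s u -> mate u = Some w -> inS s w }.

Lemma notin_node s C z : ~~ inS s z -> C \in nodes s -> z \notin C.
Proof. by move=> hz hC; apply: contraNN hz => hzC; apply/existsP; exists C; rewrite hC. Qed.

Lemma mem_node_neq s C z w : ~~ inS s z -> C \in nodes s -> w \in C -> w != z.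
Proof. by move=> hz hC hw; apply: contraNneq (notin_node hz hC) => <-. Qed.

Lemma node_neq_set1 s C z : ~~ inS s z -> C \in nodes s -> C != [set z].
Proof. by move=> hz hC; apply: contraNneq (notin_node hz hC) => ->; rewrite set11. Qed.

Lemma oddOnP s Bz B z :
  reflect (exists C, [/\ C \in nodes s, C \notin blossoms s, z \in C, anc s B C & anc s C Bz])
          (z \in oddOn s Bz B).
Proof.
rewrite inE; apply: (iffP existsP) => [[C /and5P hC]|[C /and5P hC]]; by exists C.
Qed.

Section Properties.
Variables (s : state V) (invs : search_inv s).

Lemma node_key_mem A a : A \in nodes s -> node_key s A = Some a -> a \in A.
Proof. by move=> hA; case: (node_keyP invs hA) => b -> hb [<-]. Qed.

Lemma same_node C D w : C \in nodes s -> D \in nodes s -> w \in C -> w \in D -> C = D.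
Proof.
move=> hC hD hwC hwD; apply/eqP/negPn/negP => neCD.
by move: (disjointFr (nodes_disjoint invs hC hD neCD) hwC); rewrite hwD.
Qed.

Lemma anc_level C A : C \in nodes s -> anc s A C ->
  A \in nodes s /\ (A = C \/ node_level s A < node_level s C).
Proof.
move=> hC h; pattern A; apply: (anc_ind _ _ h) => [|D E _ [hD hl] hp]; first by split; [|left].
have [hE lt] := parent_level invs hD hp; split => //; right.
by case: hl => [<-|]; [|move/(ltn_trans lt)].
Qed.

Lemma size_cp_blossom A w : A \in blossoms s -> w \in A -> size (cp s w) = (lcp s w).+1.
Proof. by move=> hA hw; rewrite (size_cp invs (blossom_node invs hA) hw) /key_lcp hA. Qed.

Lemma lca_blossom Bx By B : Bx \in blossoms s -> By \in blossoms s ->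
  anc s B Bx -> anc s B By -> (forall A, anc s A Bx -> anc s A By -> anc s A B) ->
  B \in blossoms s.
Proof.
move=> hBx hBy hax hay hlca; apply/negPn/negP => hBo.
have neB C : C \in blossoms s -> B <> C by move=> hC eB; rewrite eB hC in hBo.
case: (anc_child hax) => [/neB//|[K pK aK]]; case: (anc_child hay) => [/neB//|[K' pK' aK']].
have [hK _] := anc_level (blossom_node invs hBx) aK.
have [hK' _] := anc_level (blossom_node invs hBy) aK'.
have eK := odd_child_uniq invs hK hK' hBo pK pK'; subst K'.
have [hB lt] := parent_level invs hK pK.
case: (anc_level hB (hlca _ aK aK')) => _ [eKB|lt2]; first by rewrite eKB ltnn in lt.
by move: (ltn_trans lt lt2); rewrite ltnn.
Qed.

Lemma blossom_notin_oddOn A a Bz B : A \in blossoms s -> a \in A -> a \notin oddOn s Bz B.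
Proof.
move=> hA ha; apply/oddOnP => -[C [hC hCo haC _ _]].
by move: hCo; rewrite (same_node hC (blossom_node invs hA) haC ha) hA.
Qed.

Lemma odd_anc_cp D z Bz w : D \in nodes s -> D \notin blossoms s -> z \in D ->
  anc s D Bz -> Bz \in nodes s -> w \in Bz ->
  z \in cp s w /\ index z (cp s w) = lcpo s z.
Proof.
move=> hD hDo hz hDB hBz hw; have [a [hk ha hi]] := cp_anc_key invs hBz hw hDB.
have [c eD] := odd_node_set1 invs hD hDo.
move: (node_key_mem hD hk) hz ha hi; rewrite eD !in_set1 => /eqP -> /eqP ->.
by rewrite -eD /key_lcp (negbTE hDo).
Qed.

End Properties.

Lemma search_inv_init : search_inv (init_state mate).
Proof.
have nodeP C : C \in nodes (init_state mate) -> exists2 u, C = [set u] & free mate u.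
  by case/imsetP=> u; rewrite inE => hu ->; exists u.
have ancE A C : anc (init_state mate) A C -> A = C by case/ancP => // -[].
have key1 u : node_key (init_state mate) [set u] = Some u.
  by rewrite /node_key /= pick_set1; case: ifP.
split => //=.
- move=> C D /nodeP [u -> _] /nodeP [w -> _] neCD; rewrite disjoints1 in_set1.
  by apply: contraNN neCD => /eqP ->.
- by move=> A /nodeP [u -> _]; exists u; rewrite ?key1 ?set11.
- by move=> A ->.
- move=> C w A /nodeP [u -> _]; rewrite in_set1 => /eqP -> /ancE ->.
  by exists u; rewrite key1 mem_seq1 eqxx /key_lcp; case: ifP.
- by move=> C w _ _; rewrite /key_lcp; case: ifP.
- move=> C w u hC hw; rewrite mem_seq1 => /eqP ->.
  by apply/existsP; exists C; rewrite hC.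
- move=> u w /existsP [C /andP [/nodeP [v -> fv]]].
  by rewrite in_set1 => /eqP ->; rewrite (eqP fv).
Qed.

End Invariant.

Section Grow.
Variables (V : finType) (e : rel V) (mate : V -> option V).
Hypotheses (e_irr : irreflexive e) (mateP : is_matching e mate).
Variables (s : state V) (Bv : {set V}) (v x y : V).
Hypotheses (invs : search_inv mate s) (delta_even : ~~ odd (delta s))
  (Bv_blossom : Bv \in blossoms s) (v_Bv : v \in Bv) (lcp_v : lcp s v = delta s - 2)
  (x_notin_S : ~~ inS s x) (mate_x : mate x = Some y).
Implicit Types (A C D O : {set V}).

Local Notation s' := (grow s Bv v x y).

Lemma mate_y : mate y = Some x. Proof. by case: (mateP mate_x). Qed.

Lemma y_notin_S : ~~ inS s y.
Proof. by apply: contraNN x_notin_S => hy; exact: (inS_mate invs hy mate_y). Qed.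

Lemma x_neq_y : x != y.
Proof. by case: (mateP mate_x) => _; apply: contraTneq => ->; rewrite e_irr. Qed.

Lemma delta_gt1 : 1 < delta s.
Proof. by move: (delta_gt0 invs) delta_even; case: (delta s) => [|[|]]. Qed.

Lemma Bv_node : Bv \in nodes s. Proof. exact: (blossom_node invs Bv_blossom). Qed.

Lemma set1x_neq_set1y : [set x] != [set y].
Proof. by apply: contra_neq x_neq_y => /setP/(_ x); rewrite !in_set1 eqxx => /esym/eqP. Qed.

Lemma set1_notin_blossoms z : ~~ inS s z -> [set z] \notin blossoms s.
Proof. by move=> hz; apply/negP => /(blossom_node invs) /(node_neq_set1 hz); rewrite eqxx. Qed.

Lemma grow_nodesP C : C \in nodes s' -> [\/ C \in nodes s, C = [set x] | C = [set y]].
Proof. by rewrite !inE => /or3P [|/eqP|/eqP]; [constructor 1|constructor 2|constructor 3]. Qed.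

Lemma grow_nodes_old C : C \in nodes s -> C \in nodes s'.
Proof. by move=> hC; rewrite !inE hC. Qed.

Lemma grow_nodes_x : [set x] \in nodes s'. Proof. by rewrite !inE eqxx !orbT. Qed.
Lemma grow_nodes_y : [set y] \in nodes s'. Proof. by rewrite !inE eqxx !orbT. Qed.

Lemma grow_blossomsE C : C != [set y] -> (C \in blossoms s') = (C \in blossoms s).
Proof. by move=> hC; rewrite /= !inE (negbTE hC) orbF. Qed.

Lemma grow_blossoms_y : [set y] \in blossoms s'. Proof. by rewrite !inE eqxx orbT. Qed.

Lemma grow_keyE C : C != [set y] -> node_key s' C = node_key s C.
Proof. by move=> hC; rewrite /node_key grow_blossomsE //= (negbTE hC). Qed.

Lemma grow_key_lcpE C a :
  C != [set y] -> a != x -> a != y -> key_lcp s' C a = key_lcp s C a.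
Proof. by move=> hC hax hay; rewrite /key_lcp grow_blossomsE //= (negbTE hax) (negbTE hay). Qed.

Lemma grow_levelE C : C \in nodes s -> node_level s' C = node_level s C.
Proof.
move=> hC; have nCy := node_neq_set1 y_notin_S hC.
rewrite /node_level grow_keyE //; case hk: (node_key s C) => [a|] //.
have ha := node_key_mem invs hC hk.
by rewrite grow_key_lcpE // ?(mem_node_neq x_notin_S hC ha) ?(mem_node_neq y_notin_S hC ha).
Qed.

Lemma grow_key_x : node_key s' [set x] = Some x.
Proof.
rewrite grow_keyE ?set1x_neq_set1y //.
by rewrite /node_key (negbTE (set1_notin_blossoms x_notin_S)) pick_set1.
Qed.

Lemma grow_key_y : node_key s' [set y] = Some y.
Proof. by rewrite /node_key grow_blossoms_y /= eqxx. Qed.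

Lemma grow_key_lcp_x : key_lcp s' [set x] x = (delta s).-1.
Proof.
rewrite /key_lcp grow_blossomsE ?set1x_neq_set1y //.
by rewrite (negbTE (set1_notin_blossoms x_notin_S)) /= eqxx.
Qed.

Lemma grow_key_lcp_y : key_lcp s' [set y] y = delta s.
Proof. by rewrite /key_lcp grow_blossoms_y /= eqxx. Qed.

Lemma grow_parentE C : C \in nodes s -> parent s' C = parent s C.
Proof.
move=> hC; rewrite /= (negbTE (node_neq_set1 x_notin_S hC)).
by rewrite (negbTE (node_neq_set1 y_notin_S hC)).
Qed.

Lemma grow_parent_x : parent s' [set x] = Some Bv. Proof. by rewrite /= eqxx. Qed.

Lemma grow_parent_y : parent s' [set y] = Some [set x].
Proof. by rewrite /= eq_sym (negbTE set1x_neq_set1y) eqxx. Qed.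

Lemma grow_anc_old A C : C \in nodes s -> anc s' A C -> A \in nodes s /\ anc s A C.
Proof.
move=> hC h; pattern A; apply: (anc_ind _ _ h) => [|D E _ [hD hDC]].
  by split=> //; apply: anc_refl.
rewrite grow_parentE // => hp; have [hE _] := parent_level invs hD hp.
by split => //; apply: anc_trans hDC; apply: anc_parent hp (anc_refl _ _).
Qed.

Lemma grow_inS z : inS s' z = [|| inS s z, z == x | z == y].
Proof.
apply/existsP/or3P => [[C /andP [/grow_nodesP [hC|->|->] hz]]|].
- by constructor 1; apply/existsP; exists C; rewrite hC.
- by constructor 2; rewrite -in_set1.
- by constructor 3; rewrite -in_set1.
case=> [/existsP [C /andP [hC hz]]|/eqP->|/eqP->].
- by exists C; rewrite grow_nodes_old.
- by exists [set x]; rewrite grow_nodes_x set11.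
- by exists [set y]; rewrite grow_nodes_y set11.
Qed.

Lemma grow_cpE C w : C \in nodes s -> w \in C -> cp s' w = cp s w.
Proof.
move=> hC hw; rewrite /= (negbTE (mem_node_neq x_notin_S hC hw)).
by rewrite (negbTE (mem_node_neq y_notin_S hC hw)).
Qed.

Lemma grow_cp_x : cp s' x = cp s v ++ [:: x].
Proof. by rewrite /= eqxx cats1. Qed.

Lemma grow_cp_y : cp s' y = cp s v ++ [:: x; y].
Proof. by rewrite /= eq_sym (negbTE x_neq_y) eqxx -!cats1 -catA. Qed.

Lemma notin_cp_v z : ~~ inS s z -> z \notin cp s v.
Proof. by move=> hz; apply: contraNN hz; exact: (cp_inS invs Bv_node v_Bv). Qed.

Lemma size_cp_v : size (cp s v) = (lcp s v).+1.
Proof. exact: (size_cp_blossom invs Bv_blossom v_Bv). Qed.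

Lemma grow_disjoint C D : C \in nodes s' -> D \in nodes s' -> C != D -> [disjoint C & D].
Proof.
have new_set1 z E : ~~ inS s z -> E \in nodes s -> [disjoint [set z] & E].
  by move=> hz hE; rewrite disjoints1 (notin_node hz hE).
have dx E := new_set1 x E x_notin_S; have dy E := new_set1 y E y_notin_S.
have dxy : [disjoint [set x] & [set y]] by rewrite disjoints1 in_set1 x_neq_y.
case/grow_nodesP=> [hC|->|->] /grow_nodesP [hD|->|->] neCD;
  try by rewrite eqxx in neCD.
- exact: (nodes_disjoint invs hC hD neCD).
- by rewrite disjoint_sym dx.
- by rewrite disjoint_sym dy.
- exact: dx.
- exact: dxy.
- exact: dy.
- by rewrite disjoint_sym.
Qed.

Lemma grow_node_keyP A : A \in nodes s' -> exists2 a, node_key s' A = Some a & a \in A.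
Proof.
case/grow_nodesP=> [hA|->|->]; last 2 first.
- by exists x; rewrite ?grow_key_x ?set11.
- by exists y; rewrite ?grow_key_y ?set11.
by rewrite grow_keyE ?(node_neq_set1 y_notin_S hA) //; apply: (node_keyP invs hA).
Qed.

Lemma grow_odd_node_set1 A : A \in nodes s' -> A \notin blossoms s' -> exists a, A = [set a].
Proof.
case/grow_nodesP=> [hA|->|->]; last 2 first.
- by exists x.
- by rewrite grow_blossoms_y.
by rewrite grow_blossomsE ?(node_neq_set1 y_notin_S hA) //; apply: (odd_node_set1 invs hA).
Qed.

Lemma level_Bv_le : node_level s Bv <= lcp s v.
Proof.
have [b [hk hb hi]] := cp_anc_key invs Bv_node v_Bv (anc_refl s Bv).
by rewrite /node_level hk -hi -ltnS -size_cp_v index_mem.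
Qed.

Lemma grow_parent_level C D : C \in nodes s' -> parent s' C = Some D ->
  D \in nodes s' /\ node_level s' D < node_level s' C.
Proof.
have level_x : node_level s' [set x] = (delta s).-1.
  by rewrite /node_level grow_key_x grow_key_lcp_x.
have level_y : node_level s' [set y] = delta s.
  by rewrite /node_level grow_key_y grow_key_lcp_y.
case/grow_nodesP=> [hC|->|->].
- rewrite grow_parentE // => hp; have [hD lt] := parent_level invs hC hp.
  by rewrite !grow_levelE // grow_nodes_old.
- rewrite grow_parent_x => -[<-]; rewrite grow_nodes_old ?Bv_node // grow_levelE ?Bv_node //.
  by split=> //; move: level_Bv_le lcp_v delta_gt1; rewrite level_x; lia.
- rewrite grow_parent_y => -[<-]; rewrite level_x level_y.
  by split; [apply: grow_nodes_x | move: delta_gt1; lia].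
Qed.

Lemma grow_odd_child_uniq O C1 C2 : C1 \in nodes s' -> C2 \in nodes s' ->
  O \notin blossoms s' -> parent s' C1 = Some O -> parent s' C2 = Some O -> C1 = C2.
Proof.
have parentP C : C \in nodes s' -> O \notin blossoms s' -> parent s' C = Some O ->
    [/\ C \in nodes s, parent s C = Some O & O \in nodes s] \/ C = [set y] /\ O = [set x].
  case/grow_nodesP=> [hC|->|->] hO.
  - by rewrite grow_parentE // => hp; left; have [hD _] := parent_level invs hC hp.
  - by rewrite grow_parent_x => -[eO]; move: hO; rewrite -eO grow_blossomsE ?Bv_blossom //;
      rewrite (node_neq_set1 y_notin_S Bv_node).
  - by rewrite grow_parent_y => -[<-]; right.
move=> h1 h2 hO p1 p2.
case: (parentP _ h1 hO p1) => [[n1 q1 nO1]|[-> eO1]];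
case: (parentP _ h2 hO p2) => [[n2 q2 nO2]|[-> eO2]] //.
- apply: (odd_child_uniq invs n1 n2 _ q1 q2).
  by rewrite -grow_blossomsE ?(node_neq_set1 y_notin_S nO1).
- by move: (node_neq_set1 x_notin_S nO1); rewrite eO2 eqxx.
- by move: (node_neq_set1 x_notin_S nO2); rewrite eO1 eqxx.
Qed.

Lemma grow_anc_Bv A t : anc s' A Bv ->
  exists a, [/\ node_key s' A = Some a, a \in cp s v ++ t &
                index a (cp s v ++ t) = key_lcp s' A a].
Proof.
case/(grow_anc_old Bv_node) => hA hAB.
have [a [hk ha hi]] := cp_anc_key invs Bv_node v_Bv hAB.
have haA := node_key_mem invs hA hk.
exists a; rewrite grow_keyE ?grow_key_lcpE ?(node_neq_set1 y_notin_S hA) //;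
  last by rewrite (mem_node_neq y_notin_S hA haA).
- by rewrite mem_cat ha index_cat ha.
- by rewrite (mem_node_neq x_notin_S hA haA).
Qed.

Lemma grow_anc_x A t : anc s' A [set x] ->
  exists a, [/\ node_key s' A = Some a, a \in cp s v ++ x :: t &
                index a (cp s v ++ x :: t) = key_lcp s' A a].
Proof.
case/ancP=> [->|[D]]; last by rewrite grow_parent_x => -[<-]; apply: grow_anc_Bv.
exists x; rewrite grow_key_x grow_key_lcp_x mem_cat mem_head orbT.
rewrite index_cat (negbTE (notin_cp_v x_notin_S)) /= eqxx addn0 size_cp_v.
by split=> //; move: lcp_v delta_gt1; lia.
Qed.

Lemma grow_cp_anc_key C w A : C \in nodes s' -> w \in C -> anc s' A C ->
  exists a, [/\ node_key s' A = Some a, a \in cp s' w &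
                index a (cp s' w) = key_lcp s' A a].
Proof.
case/grow_nodesP=> [hC|->|->]; last 2 first.
- by rewrite in_set1 => /eqP ->; rewrite grow_cp_x; apply: grow_anc_x.
- rewrite in_set1 => /eqP ->; rewrite grow_cp_y.
  case/ancP=> [->|[D]]; last by rewrite grow_parent_y => -[<-]; apply: grow_anc_x.
  exists y; rewrite grow_key_y grow_key_lcp_y mem_cat !inE eqxx !orbT.
  rewrite index_cat (negbTE (notin_cp_v y_notin_S)) /= (negbTE x_neq_y) eqxx.
  by rewrite size_cp_v; split=> //; move: lcp_v delta_gt1; lia.
move=> hw /(grow_anc_old hC) [hA hAC].
have [a [hk ha hi]] := cp_anc_key invs hC hw hAC.
have haA := node_key_mem invs hA hk.
exists a; rewrite (grow_cpE hC hw) grow_keyE ?grow_key_lcpE ?(node_neq_set1 y_notin_S hA) //.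
- by rewrite (mem_node_neq x_notin_S hA haA).
- by rewrite (mem_node_neq y_notin_S hA haA).
Qed.

Lemma grow_size_cp C w : C \in nodes s' -> w \in C -> size (cp s' w) = (key_lcp s' C w).+1.
Proof.
case/grow_nodesP=> [hC|->|->]; rewrite ?in_set1 => hw; last 2 first.
- rewrite (eqP hw) grow_cp_x grow_key_lcp_x size_cat size_cp_v.
  by move: lcp_v delta_gt1 => /=; lia.
- rewrite (eqP hw) grow_cp_y grow_key_lcp_y size_cat size_cp_v.
  by move: lcp_v delta_gt1 => /=; lia.
rewrite (grow_cpE hC hw) grow_key_lcpE ?(size_cp invs hC hw) ?(node_neq_set1 y_notin_S hC) //.
- exact: (mem_node_neq x_notin_S hC hw).
- exact: (mem_node_neq y_notin_S hC hw).
Qed.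

Lemma grow_cp_inS C w u : C \in nodes s' -> w \in C -> u \in cp s' w -> inS s' u.
Proof.
have cp_v_inS : u \in cp s v -> inS s' u.
  by move=> hu; rewrite grow_inS (cp_inS invs Bv_node v_Bv hu).
case/grow_nodesP=> [hC|->|->]; rewrite ?in_set1 => hw.
- by rewrite (grow_cpE hC hw) grow_inS => /(cp_inS invs hC hw) ->.
- rewrite (eqP hw) grow_cp_x mem_cat inE => /orP [/cp_v_inS|/eqP ->] //.
  by rewrite grow_inS eqxx orbT.
rewrite (eqP hw) grow_cp_y mem_cat !inE => /or3P [/cp_v_inS|/eqP ->|/eqP ->] //;
  by rewrite grow_inS eqxx !orbT.
Qed.

Lemma grow_inS_mate u w : inS s' u -> mate u = Some w -> inS s' w.
Proof.
rewrite !grow_inS => /or3P [hu|/eqP ->|/eqP ->] hm.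
- by rewrite (inS_mate invs hu hm).
- by move: hm; rewrite mate_x => -[<-]; rewrite eqxx !orbT.
- by move: hm; rewrite mate_y => -[<-]; rewrite eqxx orbT.
Qed.

Lemma search_inv_grow : search_inv mate s'.
Proof.
split.
- exact: (delta_gt0 invs).
- by move=> C; rewrite !inE => /orP [/(blossom_node invs) hC|/eqP ->]; rewrite ?hC ?eqxx ?orbT.
- exact: grow_disjoint.
- exact: grow_node_keyP.
- exact: grow_odd_node_set1.
- exact: grow_parent_level.
- exact: grow_odd_child_uniq.
- exact: grow_cp_anc_key.
- exact: grow_size_cp.
- exact: grow_cp_inS.
- exact: grow_inS_mate.
Qed.

End Grow.

Section Merge.
Variables (V : finType) (mate : V -> option V).
Variables (s : state V) (x y b : V) (Bx By B : {set V}).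
Hypotheses (invs : search_inv mate s)
  (Bx_blossom : Bx \in blossoms s) (By_blossom : By \in blossoms s)
  (x_Bx : x \in Bx) (y_By : y \in By) (anc_B_Bx : anc s B Bx) (anc_B_By : anc s B By)
  (B_lca : forall A, anc s A Bx -> anc s A By -> anc s A B)
  (key_B : node_key s B = Some b).
Implicit Types (A C D O : {set V}).

Local Notation P := (Defs.pathP s Bx By B).
Local Notation N := (\bigcup_(C in Defs.pathP s Bx By B) C).
Local Notation oX := (oddOn s Bx B).
Local Notation oY := (oddOn s By B).
Local Notation s' := (Defs.merge s x y Bx By B).

Lemma Bx_node : Bx \in nodes s. Proof. exact: (blossom_node invs Bx_blossom). Qed.
Lemma By_node : By \in nodes s. Proof. exact: (blossom_node invs By_blossom). Qed.
Lemma B_node : B \in nodes s. Proof. by case: (anc_level invs Bx_node anc_B_Bx). Qed.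

Lemma B_blossom : B \in blossoms s.
Proof. exact: (lca_blossom invs Bx_blossom By_blossom anc_B_Bx anc_B_By B_lca). Qed.

Lemma b_B : b \in B. Proof. exact: (node_key_mem invs B_node key_B). Qed.

Lemma mem_pathP C : (C \in P) = [&& C \in nodes s, anc s B C & anc s C Bx || anc s C By].
Proof. by rewrite inE. Qed.

Lemma B_path : B \in P. Proof. by rewrite mem_pathP B_node anc_refl anc_B_Bx. Qed.

Lemma path_node C : C \in P -> C \in nodes s. Proof. by rewrite mem_pathP => /and3P []. Qed.

Lemma path_anc C : C \in P -> anc s B C. Proof. by rewrite mem_pathP => /and3P []. Qed.

Lemma mem_merged C w : C \in P -> w \in C -> w \in N.
Proof. by move=> hC hw; apply/bigcupP; exists C. Qed.

Lemma notin_merged D w : D \in nodes s -> D \notin P -> w \in D -> w \notin N.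
Proof.
move=> hD hDP hw; apply/bigcupP => -[C hC hwC].
by move: hDP; rewrite -(same_node invs (path_node hC) hD hwC hw) hC.
Qed.

Lemma merged_neq D : D \in nodes s -> D \notin P -> D != N.
Proof.
move=> hD hDP; apply/eqP => eD; have bN := mem_merged B_path b_B.
by move: (bN); rewrite -{1}eD => /(notin_merged hD hDP); rewrite bN.
Qed.

Lemma oddOn_merged z : (z \in oX) || (z \in oY) -> z \in N.
Proof.
by case/orP=> /oddOnP [C [hC _ hz hBC hCB]]; apply: (mem_merged _ hz);
  rewrite mem_pathP hC hBC hCB ?orbT.
Qed.

Lemma notin_oddOn D w : D \in nodes s -> D \notin P -> w \in D ->
  (w \in oX) || (w \in oY) = false.
Proof. by move=> hD hDP hw; apply: contraNF (notin_merged hD hDP hw); apply: oddOn_merged. Qed.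

Lemma parent_B_outside D : parent s B = Some D -> D \in nodes s /\ D \notin P.
Proof.
move=> hp; have [hD lt] := parent_level invs B_node hp; split => //.
apply/negP => /path_anc /(anc_level invs hD) [_ [eDB|lt2]].
  by rewrite eDB ltnn in lt.
by move: (ltn_trans lt lt2); rewrite ltnn.
Qed.

Lemma merge_nodesE C : (C \in nodes s') = (C \in nodes s) && (C \notin P) || (C == N).
Proof. by rewrite /= !inE andbC. Qed.

Lemma merge_blossomsE C : (C \in blossoms s') = (C \in blossoms s) && (C \notin P) || (C == N).
Proof. by rewrite /= !inE andbC. Qed.

Lemma merged_node : N \in nodes s'. Proof. by rewrite merge_nodesE eqxx orbT. Qed.
Lemma merged_blossom : N \in blossoms s'. Proof. by rewrite merge_blossomsE eqxx orbT. Qed.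

Lemma merge_nodes_old C : C \in nodes s -> C \notin P -> C \in nodes s'.
Proof. by move=> hC hCP; rewrite merge_nodesE hC hCP. Qed.

Lemma merge_nodesP C : C \in nodes s' -> C = N \/ [/\ C != N, C \in nodes s & C \notin P].
Proof.
rewrite merge_nodesE => /orP [/andP [hC hCP]|/eqP ->]; last by left.
by right; split => //; apply: merged_neq.
Qed.

Lemma merge_blossoms_old C : C \notin P -> C != N -> (C \in blossoms s') = (C \in blossoms s).
Proof. by move=> hCP hCN; rewrite merge_blossomsE (negbTE hCN) hCP orbF andbT. Qed.

Lemma merge_key_old C : C \notin P -> C != N -> node_key s' C = node_key s C.
Proof. by move=> hCP hCN; rewrite /node_key merge_blossoms_old //= (negbTE hCN). Qed.

Lemma merge_key_merged : node_key s' N = Some b.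
Proof. by rewrite /node_key merged_blossom /= eqxx -key_B /node_key B_blossom. Qed.

Lemma merge_lcp_old z : (z \in oX) || (z \in oY) = false -> lcp s' z = lcp s z.
Proof. by rewrite /= => ->. Qed.

Lemma merge_cp_old z : (z \in oX) || (z \in oY) = false -> cp s' z = cp s z.
Proof. by rewrite /=; case: (z \in oX); case: (z \in oY). Qed.

Lemma merge_key_lcp_old C a : C \in nodes s -> C \notin P -> C != N -> a \in C ->
  key_lcp s' C a = key_lcp s C a.
Proof.
move=> hC hCP hCN ha.
by rewrite /key_lcp merge_blossoms_old // merge_lcp_old ?(notin_oddOn hC hCP ha).
Qed.

Lemma merge_key_lcp_b : key_lcp s' N b = key_lcp s B b.
Proof.
rewrite /key_lcp merged_blossom B_blossom merge_lcp_old //.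
by rewrite !(negbTE (blossom_notin_oddOn invs _ _ B_blossom b_B)).
Qed.

Lemma merge_level_old C : C \in nodes s -> C \notin P -> C != N ->
  node_level s' C = node_level s C.
Proof.
move=> hC hCP hCN; rewrite /node_level merge_key_old //.
by case hk: (node_key s C) => [a|] //; rewrite merge_key_lcp_old ?(node_key_mem invs hC hk).
Qed.

Lemma merge_level_merged : node_level s' N = node_level s B.
Proof. by rewrite /node_level merge_key_merged key_B merge_key_lcp_b. Qed.

Lemma merge_inS u : inS s' u = inS s u.
Proof.
apply/existsP/existsP => -[C /andP [hC hu]].
- case: (merge_nodesP hC) => [eC|[_ hCo _]]; last by exists C; rewrite hCo.
  by move: hu; rewrite eC => /bigcupP [C1 h1 h2]; exists C1; rewrite h2 (path_node h1).
- case hCP: (C \in P); first by exists N; rewrite merged_node (mem_merged hCP hu).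
  by exists C; rewrite merge_nodes_old ?hCP.
Qed.

Lemma merge_parent_merged : parent s' N = parent s B.
Proof. by rewrite /= eqxx. Qed.

Lemma merge_parent_old C : C != N ->
  parent s' C = omap (fun D => if D \in P then N else D) (parent s C).
Proof. by move=> hCN; rewrite /= (negbTE hCN); case: (parent s C) => //= D; case: ifP. Qed.

(* [X] is the image in [s'] of an ancestor of [C0] in [s]. *)
Definition merge_image C0 X : Prop :=
  X = N /\ anc s B C0 \/ [/\ X \notin P, X \in nodes s & anc s X C0].

Lemma merge_image_parent C0 D E :
  merge_image C0 D -> parent s' D = Some E -> merge_image C0 E.
Proof.
case=> [[-> hB0]|[hDP hD hD0]].
  rewrite merge_parent_merged => hp; have [hE hEP] := parent_B_outside hp.
  by right; split=> //; apply: anc_trans (anc_parent hp (anc_refl _ _)) hB0.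
rewrite merge_parent_old ?merged_neq //; case hp: (parent s D) => [D2|] //= [<-].
have [hD2 _] := parent_level invs hD hp.
have aD2 : anc s D2 C0 := anc_trans (anc_parent hp (anc_refl _ _)) hD0.
case: ifP => hD2P; last by right; rewrite hD2P.
by left; split => //; apply: anc_trans (path_anc hD2P) aD2.
Qed.

Lemma merge_anc_image C0 C A : merge_image C0 C -> anc s' A C -> merge_image C0 A.
Proof.
move=> hC h; pattern A; apply: (anc_ind _ _ h) => // D E _ hD.
exact: merge_image_parent.
Qed.

Lemma merge_image_key C0 Cw w t A : Cw \in nodes s -> w \in Cw -> anc s C0 Cw ->
  merge_image C0 A ->
  exists a, [/\ node_key s' A = Some a, a \in cp s w ++ t &
                index a (cp s w ++ t) = key_lcp s' A a].
Proof.
move=> hCw hw hC0 [[-> hB0]|[hAP hA hA0]].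
  have [a [hk ha hi]] := cp_anc_key invs hCw hw (anc_trans hB0 hC0).
  move: hk ha hi; rewrite key_B => -[<-] hb hi.
  by exists b; rewrite merge_key_merged mem_cat hb index_cat hb hi merge_key_lcp_b.
have [a [hk ha hi]] := cp_anc_key invs hCw hw (anc_trans hA0 hC0).
have hAN := merged_neq hA hAP.
exists a; rewrite merge_key_old // mem_cat ha index_cat ha hi merge_key_lcp_old //.
exact: (node_key_mem invs hA hk).
Qed.

Lemma size_cp_bridge Bw Bu w u z : Bw \in blossoms s -> w \in Bw ->
  Bu \in blossoms s -> u \in Bu -> z \in oddOn s Bu B ->
  size (cp s w ++ rev (drop (index z (cp s u)) (cp s u))) = (lcp s w + 1 + lcp s u - lcpo s z).+1.
Proof.
move=> hBw hw hBu hu /oddOnP [D [hD hDo hz _ hDB]].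
have [hzu hi] := odd_anc_cp invs hD hDo hz hDB (blossom_node invs hBu) hu.
move: (hzu); rewrite -index_mem size_cat size_rev size_drop hi.
rewrite (size_cp_blossom invs hBw hw) (size_cp_blossom invs hBu hu) ltnS => le_zu.
by rewrite subSn // addnS -addnBA // addn1.
Qed.

Lemma merged_disjoint D : D \in nodes s -> D \notin P -> [disjoint N & D].
Proof.
move=> hD hDP; rewrite disjoint_sym disjoint_subset; apply/subsetP => w hw.
by rewrite inE (notin_merged hD hDP hw).
Qed.

Lemma merge_disjoint C D : C \in nodes s' -> D \in nodes s' -> C != D -> [disjoint C & D].
Proof.
case/merge_nodesP=> [->|[_ hC hCP]] /merge_nodesP [->|[_ hD hDP]] neCD.
- by rewrite eqxx in neCD.
- exact: merged_disjoint.
- by rewrite disjoint_sym; apply: merged_disjoint.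
- exact: (nodes_disjoint invs hC hD neCD).
Qed.

Lemma merge_node_keyP A : A \in nodes s' -> exists2 a, node_key s' A = Some a & a \in A.
Proof.
case/merge_nodesP=> [->|[hAN hA hAP]].
  by exists b; rewrite ?merge_key_merged ?(mem_merged B_path b_B).
by rewrite merge_key_old //; apply: (node_keyP invs hA).
Qed.

Lemma merge_odd_node_set1 A : A \in nodes s' -> A \notin blossoms s' -> exists a, A = [set a].
Proof.
case/merge_nodesP=> [->|[hAN hA hAP]]; first by rewrite merged_blossom.
by rewrite merge_blossoms_old //; apply: (odd_node_set1 invs hA).
Qed.

Lemma merge_parent_level C D : C \in nodes s' -> parent s' C = Some D ->
  D \in nodes s' /\ node_level s' D < node_level s' C.
Proof.
case/merge_nodesP=> [->|[hCN hC hCP]].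
  rewrite merge_parent_merged => hp; have [hD hDP] := parent_B_outside hp.
  have [_ lt] := parent_level invs B_node hp.
  by rewrite merge_nodes_old // merge_level_merged merge_level_old ?merged_neq.
rewrite merge_parent_old // (merge_level_old hC hCP hCN); case hp: (parent s C) => [D2|] //= [<-].
have [hD2 lt] := parent_level invs hC hp.
case: ifP => hD2P; last by rewrite merge_nodes_old ?merge_level_old ?merged_neq ?hD2P.
split; first exact: merged_node.
rewrite merge_level_merged; case: (anc_level invs hD2 (path_anc hD2P)) => _ [-> //|lt2].
exact: ltn_trans lt2 lt.
Qed.

Lemma merge_parent_pre C O : C \in nodes s' -> O != N -> parent s' C = Some O ->
  [/\ (if C == N then B else C) \in nodes s, parent s (if C == N then B else C) = Some O
    & O \notin P].
Proof.
case/merge_nodesP=> [->|[hCN hC hCP]] hON; rewrite ?eqxx ?(negbTE hCN).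
  by rewrite merge_parent_merged => hp; have [] := parent_B_outside hp; split; rewrite ?B_node.
rewrite merge_parent_old //; case hp: (parent s C) => [D|] //= [].
by case: ifP => hDP eD; [rewrite eD eqxx in hON | rewrite -eD hDP].
Qed.

Lemma merge_odd_child_uniq O C1 C2 : C1 \in nodes s' -> C2 \in nodes s' ->
  O \notin blossoms s' -> parent s' C1 = Some O -> parent s' C2 = Some O -> C1 = C2.
Proof.
move=> h1 h2 hO p1 p2; have hON : O != N by apply: contraNneq hO => ->; apply: merged_blossom.
have [n1 q1 hOP] := merge_parent_pre h1 hON p1.
have [n2 q2 _] := merge_parent_pre h2 hON p2.
have hOo : O \notin blossoms s by rewrite -merge_blossoms_old.
have := odd_child_uniq invs n1 n2 hOo q1 q2.
case/merge_nodesP: h1 => [->|[hC1N _ hC1P]]; case/merge_nodesP: h2 => [->|[hC2N _ hC2P]] //;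
  rewrite ?eqxx ?(negbTE hC1N) ?(negbTE hC2N) // => eB.
- by rewrite -eB B_path in hC2P.
- by rewrite eB B_path in hC1P.
Qed.

Lemma merge_cpE z : cp s' z =
  if z \in oY then cp s x ++ rev (drop (index z (cp s y)) (cp s y))
  else if z \in oX then cp s y ++ rev (drop (index z (cp s x)) (cp s x))
  else cp s z.
Proof. by []. Qed.

Lemma merge_cp_anc_key C w A : C \in nodes s' -> w \in C -> anc s' A C ->
  exists a, [/\ node_key s' A = Some a, a \in cp s' w &
                index a (cp s' w) = key_lcp s' A a].
Proof.
case/merge_nodesP=> [->|[hCN hC hCP]] hw hanc.
  have hA : merge_image B A by apply: merge_anc_image hanc; left; split; rewrite ?anc_refl.
  have [C1 hC1 hw1] := bigcupP hw.
  rewrite merge_cpE; case: ifP => _; first exact: merge_image_key Bx_node x_Bx anc_B_Bx hA.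
  case: ifP => _; first exact: merge_image_key By_node y_By anc_B_By hA.
  by rewrite -[cp s w]cats0; apply: merge_image_key (path_node hC1) hw1 (path_anc hC1) hA.
have hA : merge_image C A by apply: merge_anc_image hanc; right; split; rewrite ?anc_refl.
rewrite merge_cp_old ?(notin_oddOn hC hCP hw) // -[cp s w]cats0.
exact: merge_image_key hC hw (anc_refl _ _) hA.
Qed.

Lemma path_odd_oddOn C z : C \in P -> C \notin blossoms s -> z \in C -> (z \in oX) || (z \in oY).
Proof.
rewrite mem_pathP => /and3P [hC hBC /orP [hCx|hCy]] hCo hz.
- by apply/orP; left; apply/oddOnP; exists C.
- by apply/orP; right; apply/oddOnP; exists C.
Qed.

Lemma merge_size_cp C w : C \in nodes s' -> w \in C -> size (cp s' w) = (key_lcp s' C w).+1.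
Proof.
case/merge_nodesP=> [->|[hCN hC hCP]] hw; last first.
  rewrite merge_cp_old ?merge_key_lcp_old ?(notin_oddOn hC hCP hw) //.
  exact: (size_cp invs hC hw).
rewrite /key_lcp merged_blossom merge_cpE /=; case: ifP => wY.
  by rewrite orbT (size_cp_bridge Bx_blossom x_Bx By_blossom y_By wY).
case: ifP => wX /=.
  by rewrite (size_cp_bridge By_blossom y_By Bx_blossom x_Bx wX) !(addnAC _ 1) (addnC (lcp s y)).
have [C1 hC1 hw1] := bigcupP hw; case hC1b: (C1 \in blossoms s).
  exact: (size_cp_blossom invs hC1b hw1).
by move: (path_odd_oddOn hC1 (negbT hC1b) hw1); rewrite wX wY.
Qed.

Lemma merge_cp_inS C w u : C \in nodes s' -> w \in C -> u \in cp s' w -> inS s' u.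
Proof.
rewrite merge_inS; case/merge_nodesP=> [->|[hCN hC hCP]] hw; last first.
  by rewrite merge_cp_old ?(notin_oddOn hC hCP hw) //; apply: (cp_inS invs hC hw).
have [C1 hC1 hw1] := bigcupP hw.
have inS_x := cp_inS invs Bx_node x_Bx; have inS_y := cp_inS invs By_node y_By.
rewrite merge_cpE; case: ifP => _.
  by rewrite mem_cat mem_rev => /orP [/inS_x|/mem_drop /inS_y].
case: ifP => _; last exact: (cp_inS invs (path_node hC1) hw1).
by rewrite mem_cat mem_rev => /orP [/inS_y|/mem_drop /inS_x].
Qed.

Lemma search_inv_merge_key : search_inv mate s'.
Proof.
split.
- exact: (delta_gt0 invs).
- move=> C; rewrite merge_blossomsE => /orP [/andP [hC hCP]|/eqP ->]; last exact: merged_node.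
  by apply: merge_nodes_old => //; apply: (blossom_node invs).
- exact: merge_disjoint.
- exact: merge_node_keyP.
- exact: merge_odd_node_set1.
- exact: merge_parent_level.
- exact: merge_odd_child_uniq.
- exact: merge_cp_anc_key.
- exact: merge_size_cp.
- exact: merge_cp_inS.
- by move=> u w; rewrite !merge_inS; apply: (inS_mate invs).
Qed.

End Merge.

Lemma search_inv_merge (V : finType) (mate : V -> option V) (s : state V) x y Bx By B :
  search_inv mate s -> Bx \in blossoms s -> By \in blossoms s -> x \in Bx -> y \in By ->
  anc s B Bx -> anc s B By -> (forall A, anc s A Bx -> anc s A By -> anc s A B) ->
  search_inv mate (Defs.merge s x y Bx By B).
Proof.
move=> invs hBx hBy hx hy hax hay hlca.
have [hB _] := anc_level invs (blossom_node invs hBx) hax.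
have [b hb _] := node_keyP invs hB.
exact: search_inv_merge_key hb.
Qed.

Lemma search_inv_next_phase (V : finType) (mate : V -> option V) (s : state V) d g :
  search_inv mate s -> 0 < d ->
  search_inv mate {| delta := d; growing := g; nodes := nodes s; blossoms := blossoms s;
                     parent := parent s; base := base s; lcp := lcp s; lcpo := lcpo s;
                     cp := cp s |}.
Proof. by case=> *; split. Qed.

Lemma reachable_search_inv (V : finType) (e : rel V) (mate : V -> option V) (s : state V) :
  irreflexive e -> is_matching e mate -> reachable e mate s -> search_inv mate s.
Proof.
move=> e_irr mateP; elim=> [|s1 s2 _ inv1 st]; first exact: search_inv_init.
case: st inv1 => {s1 s2} [s1 Bv v x y _ ? ? ? ? _ ? ? inv1 | s1 _ _ inv1 |
                          s1 x y Bx By B _ _ _ ? ? ? ? _ _ ? ? ? inv1 | s1 _ _ inv1].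
- exact: search_inv_grow.
- exact: search_inv_next_phase (delta_gt0 inv1).
- exact: search_inv_merge.
- exact: search_inv_next_phase.
Qed.

Theorem lemma1 (V : finType) (e : rel V) (mate : V -> option V)
  (e_sym : symmetric e) (e_irr : irreflexive e)
  (HM : is_matching e mate)
  (s : state V) (Hs : reachable e mate s)
  (B : {set V}) (HB : B \in blossoms s) (v : V) (Hv : v \in B) :
  exists b, [/\ base s B = Some b, b \in cp s v &
    lcp s b + (size (drop (index b (cp s v)) (cp s v))).-1 = lcp s v].
Proof.
have invs := reachable_search_inv e_irr HM Hs.
have [b [key_b b_cp index_b]] := cp_anc_key invs (blossom_node invs HB) Hv (anc_refl s B).
move: key_b index_b; rewrite /node_key /key_lcp HB => base_b index_b.
exists b; split=> //; move: (b_cp); rewrite -index_mem size_drop index_b.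
by rewrite (size_cp_blossom invs HB Hv) ltnS => le_bv; rewrite subSn //= subnKC.
Qed.
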